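(* For every integer $d\ge 1$, a countable graph $G$ is a $d$-sphere graph if and only if $G\in\mathcal{S}^d$.
   Context: Let $\mathbb{D}^d=\{x\in\mathbb{R}^{d+1}: |x|\le 1\}$ and let $\mathcal{H}_d=\{\mathbb{D}^d\cap H: H \text{ a hyperplane of } \mathbb{R}^{d+1} \text{ meeting the interior of } \mathbb{D}^d\}$. A $d$-sphere graph is a graph that is the intersection graph of a subfamily of $\mathcal{H}_d$ (vertices identified with members of the family, adjacent iff the sets intersect). For $d\ge 2$, $\mathcal{S}^d$ is the class of graphs that are intersection graphs of families of spheres in $\mathbb{R}^d$ (a sphere being the boundary of a closed ball of positive radius); $\mathcal{S}^1$ is the class of circle graphs, i.e. intersection graphs of families of chords of the circle $\mathbb{S}^1$. *)

From HB Require Import structures.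
From mathcomp Require Import all_boot all_order all_algebra.
From mathcomp Require Import reals.
Set Implicit Arguments. Unset Strict Implicit. Unset Printing Implicit Defensive.
Import Order.TTheory GRing.Theory Num.Theory.
Local Open Scope ring_scope.

Section Defs.
Variable R : realType.

Definition dotp n (x y : 'rV[R]_n) : R := \sum_(i < n) x 0 i * y 0 i.
Definition normsq n (x : 'rV[R]_n) : R := dotp x x.

Definition unit_ball d (x : 'rV[R]_d.+1) : Prop := normsq x <= 1.

Definition is_Hd_member d (S : 'rV[R]_d.+1 -> Prop) : Prop :=
  exists (a : 'rV[R]_d.+1) (b : R),
    a != 0 /\ (exists x, dotp a x = b /\ normsq x < 1) /\
    (forall x, S x <-> (unit_ball x /\ dotp a x = b)).

Definition is_sphere n (S : 'rV[R]_n -> Prop) : Prop :=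
  exists (c : 'rV[R]_n) (r : R),
    0 < r /\ (forall x, S x <-> normsq (x - c) = r ^+ 2).

Definition is_chord (S : 'rV[R]_2 -> Prop) : Prop :=
  exists p q : 'rV[R]_2,
    p != q /\ normsq p = 1 /\ normsq q = 1 /\
    (forall x, S x <-> exists t : R, 0 <= t <= 1 /\ x = (1 - t) *: p + t *: q).

(* (V, adj) is the intersection graph of a subfamily of the family of sets
   satisfying P: vertices are identified with (pairwise distinct) members,
   distinct vertices adjacent iff the sets intersect. *)
Definition intersection_graph_of n (P : ('rV[R]_n -> Prop) -> Prop)
  (V : Type) (adj : V -> V -> Prop) : Prop :=
  exists f : V -> ('rV[R]_n -> Prop),
    (forall v, P (f v)) /\
    (forall u v, (forall x, f u x <-> f v x) -> u = v) /\
    (forall u v, u <> v -> (adj u v <-> exists x, f u x /\ f v x)).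

Definition is_d_sphere_graph (d : nat) (V : Type) (adj : V -> V -> Prop) : Prop :=
  intersection_graph_of (@is_Hd_member d) adj.

Definition in_Sd (d : nat) (V : Type) (adj : V -> V -> Prop) : Prop :=
  if (2 <= d)%N then intersection_graph_of (@is_sphere d) adj
  else intersection_graph_of is_chord adj.

End Defs.

Definition simple_graph (V : Type) (adj : V -> V -> Prop) : Prop :=
  (forall u v, adj u v -> adj v u) /\ (forall v, ~ adj v v).

Definition countable_type (V : Type) : Prop :=
  exists g : V -> nat, forall u v, g u = g v -> u = v.

From mathcomp Require Import all_boot all_order all_algebra.
From mathcomp Require Import all_classical reals lebesgue_measure polyrcf.
From mathcomp Require Import ring lra zify.
Set Implicit Arguments. Unset Strict Implicit. Unset Printing Implicit Defensive.
Import Order.TTheory GRing.Theory Num.Theory.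
Local Open Scope ring_scope.

(* For d >= 2, pick a point p of the unit sphere lying on none of the countably many
   hyperplanes (such a hyperplane meets the rational curve s |-> istereo (s, s^2, ..., s^d) in
   finitely many points, and R is uncountable) and reflect p to the north pole.  Inverse
   stereographic projection from the north pole then turns each section of the ball by a
   hyperplane avoiding the pole into a sphere of R^d, and conversely.  Two ball sections meet iff
   they meet on the unit sphere, because the intersection of two hyperplanes has dimension
   d - 1 >= 1 and thus reaches the sphere from any point of the ball; for the same reason a ball
   section is determined by its trace on the sphere.  For d = 1 the members of H_1 are exactly
   the chords of the circle. *)

Section DotProduct.
Variables (R : realType) (n : nat).
Implicit Types (a p q v w x y z : 'rV[R]_n) (b k t : R).

Lemma dotpC x y : dotp x y = dotp y x.
Proof. by apply: eq_bigr => i _; rewrite mulrC. Qed.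

Lemma dotpDl x y z : dotp (x + y) z = dotp x z + dotp y z.
Proof. by rewrite /dotp -big_split; apply: eq_bigr => i _; rewrite mxE mulrDl. Qed.

Lemma dotpZl k x y : dotp (k *: x) y = k * dotp x y.
Proof. by rewrite /dotp mulr_sumr; apply: eq_bigr => i _; rewrite mxE mulrA. Qed.

Lemma dotpNl x y : dotp (- x) y = - dotp x y.
Proof. by rewrite -scaleN1r dotpZl mulN1r. Qed.

Lemma dotpBl x y z : dotp (x - y) z = dotp x z - dotp y z.
Proof. by rewrite dotpDl dotpNl. Qed.

Lemma dotpDr x y z : dotp z (x + y) = dotp z x + dotp z y.
Proof. by rewrite dotpC dotpDl !(dotpC z). Qed.

Lemma dotpZr k x y : dotp y (k *: x) = k * dotp y x.
Proof. by rewrite dotpC dotpZl dotpC. Qed.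

Lemma dotpBr x y z : dotp z (x - y) = dotp z x - dotp z y.
Proof. by rewrite dotpC dotpBl !(dotpC z). Qed.

Lemma dotp0l x : dotp 0 x = 0.
Proof. by rewrite -(scale0r 0) dotpZl mul0r. Qed.

Lemma dotp0r x : dotp x 0 = 0.
Proof. by rewrite dotpC dotp0l. Qed.

Lemma normsq_ge0 x : 0 <= normsq x.
Proof. by apply: sumr_ge0 => i _; rewrite -expr2 sqr_ge0. Qed.

Lemma normsq_eq0 x : normsq x = 0 -> x = 0.
Proof.
move=> /eqP; rewrite psumr_eq0 => [/allP x0|i _]; last by rewrite -expr2 sqr_ge0.
apply/matrixP => i j; rewrite (ord1 i) mxE.
by have := x0 j (mem_index_enum j); rewrite /= mulf_eq0 orbb => /eqP.
Qed.

Lemma normsq_gt0 x : x != 0 -> 0 < normsq x.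
Proof.
by move=> x0; rewrite lt_def normsq_ge0 andbT; apply: contraNneq x0 => /normsq_eq0->.
Qed.

Lemma normsqD x y : normsq (x + y) = normsq x + 2 * dotp x y + normsq y.
Proof. rewrite /normsq !dotpDl !dotpDr (dotpC y x); ring. Qed.

Lemma normsqB x y : normsq (x - y) = normsq x - 2 * dotp x y + normsq y.
Proof. rewrite /normsq !dotpBl !dotpBr (dotpC y x); ring. Qed.

Lemma normsqZ k x : normsq (k *: x) = k ^+ 2 * normsq x.
Proof. rewrite /normsq dotpZl dotpZr; ring. Qed.

Lemma normsq_line x v t :
  normsq (x + t *: v) = normsq x + 2 * t * dotp x v + t ^+ 2 * normsq v.
Proof. by rewrite normsqD normsqZ dotpZr mulrA. Qed.

Lemma cauchy_schwarz a x : dotp a x ^+ 2 <= normsq a * normsq x.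
Proof.
have [->|a0] := eqVneq a 0; first by rewrite dotp0l /normsq dotp0l !mul0r expr0n.
have := normsq_ge0 (normsq a *: x - dotp a x *: a).
rewrite normsqB !normsqZ dotpZl dotpZr (dotpC x a).
rewrite (_ : _ + _ = normsq a * (normsq a * normsq x - dotp a x ^+ 2)); last first.
  by rewrite /normsq; ring.
by rewrite pmulr_rge0 ?normsq_gt0 // subr_ge0.
Qed.

Lemma dotp_unit_lt1 p q : p != q -> normsq p = 1 -> normsq q = 1 -> dotp p q < 1.
Proof.
move=> pq p1 q1; have /normsq_gt0 : p - q != 0 by rewrite subr_eq0.
by rewrite normsqB p1 q1 => ?; lra.
Qed.

Lemma normsq_gt_sqr_neq0 a b : b ^+ 2 < normsq a -> a != 0.
Proof.
apply: contraTneq => ->; rewrite /normsq dotp0l -leNgt; exact: sqr_ge0.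
Qed.

Lemma hyperplane_meets_open_ball a b : a != 0 ->
  (exists x, dotp a x = b /\ normsq x < 1) <-> b ^+ 2 < normsq a.
Proof.
move=> a0; split=> [[x [<- x1]]|ba].
  apply: le_lt_trans (cauchy_schwarz a x) _.
  by rewrite -ltr_pdivlMl ?normsq_gt0 // mulVf ?gt_eqF ?normsq_gt0.
have {}a0 : 0 < normsq a := normsq_gt0 a0.
exists ((b / normsq a) *: a); split; first by rewrite dotpZr mulfVK ?gt_eqF.
rewrite normsqZ (_ : _ * _ = b ^+ 2 / normsq a); last by field; rewrite gt_eqF.
by rewrite ltr_pdivrMr // mul1r.
Qed.

Lemma line_meets_unit_sphere2 x v : normsq x < 1 -> v != 0 ->
  exists t1 t2, t1 != t2 /\ normsq (x + t1 *: v) = 1 /\ normsq (x + t2 *: v) = 1.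
Proof.
move=> x1 /normsq_gt0 v0.
set A := normsq v in v0 *; set B := dotp x v; set C := normsq x in x1.
set D := B ^+ 2 - A * (C - 1).
have D0 : 0 < D by rewrite /D mulrBr; have := sqr_ge0 B; nra.
set s := Num.sqrt D.
have s0 : 0 < s by rewrite sqrtr_gt0.
have sD : s ^+ 2 = D by rewrite sqr_sqrtr // ltW.
have A0 : A != 0 by rewrite gt_eqF.
have root t : (A * t + B) ^+ 2 = D -> normsq (x + t *: v) = 1.
  by rewrite normsq_line -/A -/B -/C /D => h; apply: (mulfI A0); rewrite mulr1; nra.
exists ((- B + s) / A), ((- B - s) / A); split; last split.
- by apply/eqP => /(mulIf (invr_neq0 A0)) ?; lra.
- by apply: root; rewrite mulrC divfK // -sD; ring.
- by apply: root; rewrite mulrC divfK // -sD; ring.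
Qed.

Lemma line_meets_unit_sphere x v : normsq x <= 1 -> v != 0 ->
  exists t, normsq (x + t *: v) = 1.
Proof.
rewrite le_eqVlt => /predU1P [x1|x1] v0; first by exists 0; rewrite scale0r addr0.
by have [t [_ [_ [? _]]]] := line_meets_unit_sphere2 x1 v0; exists t.
Qed.

Lemma exists_orthogonal2 a1 a2 : (3 <= n)%N ->
  exists v, v != 0 /\ dotp a1 v = 0 /\ dotp a2 v = 0.
Proof.
move=> n3.
pose A : 'M[R]_(n, 2) := \matrix_(i, j) (if j == ord0 then a1 0 i else a2 0 i).
have K0 : kermx A != 0.
  by rewrite -mxrank_eq0 mxrank_ker subn_eq0 -ltnNge (leq_ltn_trans (rank_leq_col A)).
have [i Ki] : exists i, row i (kermx A) != 0.
  apply/existsP; apply: contraNT K0 => /existsPn K.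
  by apply/eqP/row_matrixP => i; rewrite row0; apply/eqP/negbNE/K.
exists (row i (kermx A)); split=> //.
have /rowP KA : row i (kermx A) *m A = 0 by rewrite -row_mul mulmx_ker row0.
have := KA ord0; have := KA (lift ord0 ord0); rewrite !mxE => K2 K1.
by split; [rewrite dotpC -[RHS]K1|rewrite dotpC -[RHS]K2]; apply: eq_bigr => j _; rewrite !mxE.
Qed.

Definition mirror w x := x - (2 * dotp x w / normsq w) *: w.

Lemma dotp_mirror_adj w a x : dotp (mirror w a) x = dotp a (mirror w x).
Proof.
rewrite /mirror dotpBl dotpBr dotpZl dotpZr (dotpC w x); congr (_ - _).
by rewrite /normsq; ring.
Qed.

Lemma mirrorK w : involutive (mirror w).
Proof.
move=> x; rewrite /mirror; have [->|w0] := eqVneq w 0; first by rewrite !scaler0 !subr0.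
have w2 : normsq w != 0 by rewrite gt_eqF ?normsq_gt0.
set c := 2 * dotp x w / normsq w.
have -> : 2 * dotp (x - c *: w) w / normsq w = - c.
  by rewrite dotpBl dotpZl -/(normsq w) /c; field.
by rewrite scaleNr opprK subrK.
Qed.

Lemma normsq_mirror w x : normsq (mirror w x) = normsq x.
Proof. by rewrite /normsq dotp_mirror_adj mirrorK. Qed.

Lemma mirror_unit_swap p q : normsq p = 1 -> normsq q = 1 -> mirror (p - q) q = p.
Proof.
move=> p1 q1; rewrite /mirror; have [pq|pq] := eqVneq (p - q) 0.
  by rewrite pq scaler0 subr0; apply/eqP; rewrite eq_sym -subr_eq0 pq.
have pq2 : normsq (p - q) != 0 by rewrite gt_eqF ?normsq_gt0.
have -> : 2 * dotp q (p - q) / normsq (p - q) = -1.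
  by move: pq2; rewrite dotpBr normsqB p1 -/(normsq q) q1 (dotpC q p) => pq2; field.
by rewrite scaleN1r opprK addrC subrK.
Qed.

Lemma hyperplanes_meet_on_unit_sphere a1 b1 a2 b2 x : (3 <= n)%N ->
  normsq x <= 1 -> dotp a1 x = b1 -> dotp a2 x = b2 ->
  exists z, [/\ normsq z = 1, dotp a1 z = b1 & dotp a2 z = b2].
Proof.
move=> n3 x1 ax1 ax2; have [v [v0 [av1 av2]]] := exists_orthogonal2 a1 a2 n3.
have [t xt1] := line_meets_unit_sphere x1 v0.
by exists (x + t *: v); rewrite !dotpDr !dotpZr av1 av2 !mulr0 !addr0.
Qed.

(* Every point of the ball section of [a1 . x = b1] lies on a chord of its sphere section. *)
Lemma unit_sphere_section_sub a1 b1 a2 b2 x : (3 <= n)%N ->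
  (forall z, normsq z = 1 -> dotp a1 z = b1 -> dotp a2 z = b2) ->
  normsq x <= 1 -> dotp a1 x = b1 -> dotp a2 x = b2.
Proof.
move=> n3 sub; rewrite le_eqVlt => /predU1P [x1|x1] ax1; first exact: sub.
have [v [v0 [av1 _]]] := exists_orthogonal2 a1 a1 n3.
have [t1 [t2 [t12 [xt1 xt2]]]] := line_meets_unit_sphere2 x1 v0.
have on_line t : normsq (x + t *: v) = 1 -> dotp a2 x + t * dotp a2 v = b2.
  by move=> xt; rewrite -dotpZr -dotpDr sub // dotpDr dotpZr av1 mulr0 addr0.
have := on_line _ xt1; have := on_line _ xt2.
have [->|a2v] := eqVneq (dotp a2 v) 0; first by rewrite mulr0 addr0.
by move=> e2 e1; move: t12; rewrite (mulIf a2v (addrI _ (etrans e1 (esym e2)))) eqxx.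
Qed.

End DotProduct.

Section Stereographic.
Variables (R : realType) (d : nat).
Implicit Types (y z : 'rV[R]_d) (a x : 'rV[R]_d.+1) (b s t : R).

Definition rcons_row y t : 'rV[R]_d.+1 :=
  \row_(i < d.+1) if unlift ord_max i is Some j then y 0 j else t.
Definition belast_row x : 'rV[R]_d := \row_(j < d) x 0 (lift ord_max j).
Definition last_row x : R := x 0 ord_max.

Lemma belast_rcons_row y t : belast_row (rcons_row y t) = y.
Proof. by apply/rowP => j; rewrite !mxE liftK. Qed.

Lemma last_rcons_row y t : last_row (rcons_row y t) = t.
Proof. by rewrite /last_row mxE unlift_none. Qed.

Lemma rcons_belast_row x : rcons_row (belast_row x) (last_row x) = x.
Proof. by apply/rowP => i; rewrite mxE; case: unliftP => [j ->|->]; rewrite ?mxE. Qed.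

Lemma dotp_rcons_row y t z s : dotp (rcons_row y t) (rcons_row z s) = dotp y z + t * s.
Proof.
rewrite /dotp big_ord_recr /=; congr (_ + _); last by rewrite !mxE unlift_none.
apply: eq_bigr => i _; rewrite (_ : widen_ord _ i = lift ord_max i); last first.
  by apply: val_inj; rewrite /= /bump leqNgt ltn_ord.
by rewrite !mxE liftK.
Qed.

Lemma normsq_rcons_row y t : normsq (rcons_row y t) = normsq y + t ^+ 2.
Proof. by rewrite /normsq dotp_rcons_row expr2. Qed.

Definition north : 'rV[R]_d.+1 := rcons_row 0 1.

Lemma normsq_north : normsq north = 1.
Proof. by rewrite normsq_rcons_row /normsq dotp0l add0r expr1n. Qed.

Lemma dotp_north a : dotp a north = last_row a.
Proof. by rewrite -(rcons_belast_row a) dotp_rcons_row dotp0r add0r mulr1 last_rcons_row. Qed.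

Definition istereo y : 'rV[R]_d.+1 :=
  rcons_row ((2 / (normsq y + 1)) *: y) ((normsq y - 1) / (normsq y + 1)).
Definition stereo x : 'rV[R]_d := (1 - last_row x)^-1 *: belast_row x.

Lemma normsqD1_neq0 y : normsq y + 1 != 0.
Proof. by rewrite gt_eqF // ltr_wpDl ?normsq_ge0. Qed.

Lemma normsq_istereo y : normsq (istereo y) = 1.
Proof.
rewrite normsq_rcons_row normsqZ.
by have := normsqD1_neq0 y; set q := normsq y => q1; field.
Qed.

Lemma unit_ball_istereo y : unit_ball (istereo y).
Proof. by rewrite /unit_ball normsq_istereo. Qed.

Lemma unit_sphereE x : normsq x = 1 -> x = north \/ exists y, x = istereo y.
Proof.
rewrite -{1}(rcons_belast_row x) normsq_rcons_row.
set t := last_row x; set u := belast_row x => ut.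
have [t1|t1] := eqVneq t 1.
  left; rewrite -(rcons_belast_row x) -/t -/u t1; congr rcons_row.
  by apply: normsq_eq0; move: ut; rewrite t1 expr1n => ?; lra.
right; exists (stereo x); rewrite /istereo /stereo -/t -/u normsqZ.
rewrite (_ : normsq u = 1 - t ^+ 2); last by lra.
rewrite -{1}(rcons_belast_row x) -/t -/u scalerA.
have t10 : 1 - t != 0 by rewrite subr_eq0 eq_sym.
have two0 : (2 : R) != 0 by rewrite pnatr_eq0.
have -> : (1 - t)^-1 ^+ 2 * (1 - t ^+ 2) + 1 = 2 / (1 - t) by field.
by congr rcons_row; [rewrite -{1}[u]scale1r; congr (_ *: _)|]; field.
Qed.

(* the hyperplane equation [a . x = b] pulled back along [istereo], with denominators cleared *)
Lemma dotp_istereo a b y :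
  (normsq y + 1) * (dotp a (istereo y) - b) =
  (last_row a - b) * normsq y + 2 * dotp (belast_row a) y - (last_row a + b).
Proof.
rewrite /istereo -{1}(rcons_belast_row a) dotp_rcons_row dotpZr.
by have := normsqD1_neq0 y; set q := normsq y => q1; field.
Qed.

End Stereographic.

Section StereographicTraces.
Variables (R : realType) (d : nat).
Implicit Types (c y : 'rV[R]_d) (a x : 'rV[R]_d.+1) (b r : R).

Definition ball_section a b x := unit_ball x /\ dotp a x = b.
Definition stereo_trace a b y := dotp a (istereo y) = b.

Lemma ball_section_istereo a b y : ball_section a b (istereo y) <-> stereo_trace a b y.
Proof. by split=> [[]|yt] //; split=> //; apply: unit_ball_istereo. Qed.

Lemma mulf_subr_eq0 k (u v : R) : k != 0 -> k * (u - v) = 0 <-> u = v.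
Proof.
move=> k0; split=> [/eqP|->]; last by rewrite subrr mulr0.
by rewrite mulf_eq0 (negbTE k0) subr_eq0 => /eqP.
Qed.

Lemma stereo_traceE a b y : stereo_trace a b y <->
  (last_row a - b) * normsq y + 2 * dotp (belast_row a) y - (last_row a + b) = 0.
Proof. by rewrite -dotp_istereo mulf_subr_eq0 ?normsqD1_neq0. Qed.

Lemma sphere_stereo_trace c r : 0 < r -> exists a b,
  [/\ b ^+ 2 < normsq a, last_row a != b &
      forall y, normsq (y - c) = r ^+ 2 <-> stereo_trace a b y].
Proof.
move=> r0; set k := normsq c - r ^+ 2.
exists (rcons_row (-2 *: c) (1 - k)), (- (1 + k)); split.
- rewrite normsq_rcons_row normsqZ -subr_gt0 (_ : _ - _ = 4 * r ^+ 2).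
    by rewrite mulr_gt0 ?exprn_gt0.
  by rewrite /k; ring.
- by rewrite last_rcons_row; apply/eqP => ?; lra.
move=> y; rewrite stereo_traceE last_rcons_row belast_rcons_row.
have -> : (1 - k - - (1 + k)) * normsq y + 2 * dotp (-2 *: c) y - (1 - k + - (1 + k)) =
          2 * (normsq (y - c) - r ^+ 2).
  by rewrite normsqB dotpZl (dotpC y c) /k; ring.
by rewrite mulf_subr_eq0 ?pnatr_eq0.
Qed.

Lemma stereo_trace_sphere a b : b ^+ 2 < normsq a -> last_row a != b ->
  is_sphere (stereo_trace a b).
Proof.
move=> ab aNb; set u := belast_row a; set t := last_row a in aNb *.
have tb0 : t - b != 0 by rewrite subr_eq0.
have na : normsq a = normsq u + t ^+ 2 by rewrite -normsq_rcons_row rcons_belast_row.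
set rr := (normsq a - b ^+ 2) / (t - b) ^+ 2.
have rr0 : 0 < rr by rewrite divr_gt0 ?subr_gt0 // lt_def sqr_ge0 andbT expf_neq0.
exists (- (t - b)^-1 *: u), (Num.sqrt rr); split; first by rewrite sqrtr_gt0.
move=> y; rewrite stereo_traceE -/u -/t sqr_sqrtr ?ltW //.
have -> : (t - b) * normsq y + 2 * dotp u y - (t + b) =
          (t - b) * (normsq (y - (- (t - b)^-1 *: u)) - rr).
  by rewrite normsqB normsqZ dotpZr (dotpC y u) /rr na; field.
by rewrite mulf_subr_eq0.
Qed.

Lemma ball_sections_meet a1 b1 a2 b2 : (2 <= d)%N -> last_row a1 != b1 ->
  (exists x, ball_section a1 b1 x /\ ball_section a2 b2 x) <->
  (exists y, stereo_trace a1 b1 y /\ stereo_trace a2 b2 y).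
Proof.
move=> d2 a1N; split=> [[x [[x1 ax1] [_ ax2]]]|[y yt]]; last first.
  by exists (istereo y); rewrite !ball_section_istereo.
have [z [z1 az1 az2]] := hyperplanes_meet_on_unit_sphere (d2 : (3 <= d.+1)%N) x1 ax1 ax2.
have [zN|[y zy]] := unit_sphereE z1; last by exists y; rewrite /stereo_trace -zy.
by move: a1N; rewrite -dotp_north -zN az1 eqxx.
Qed.

Lemma ball_sections_eq a1 b1 a2 b2 : (2 <= d)%N ->
  last_row a1 != b1 -> last_row a2 != b2 ->
  (forall y, stereo_trace a1 b1 y <-> stereo_trace a2 b2 y) ->
  forall x, ball_section a1 b1 x <-> ball_section a2 b2 x.
Proof.
move=> d2 a1N a2N tr.
suff sub : forall a b a' b', last_row a != b ->
    (forall y, stereo_trace a b y -> stereo_trace a' b' y) ->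
    forall x, ball_section a b x -> ball_section a' b' x.
  by move=> x; split; apply: sub => // y /tr.
move=> a b a' b' aN tr' x [x1 ax]; split=> //.
apply: (unit_sphere_section_sub (d2 : (3 <= d.+1)%N) _ x1 ax) => z z1 az.
have [zN|[y zy]] := unit_sphereE z1; last by rewrite zy; apply: tr'; rewrite /stereo_trace -zy.
by move: aN; rewrite -dotp_north -zN az eqxx.
Qed.

End StereographicTraces.

Local Open Scope classical_set_scope.
Local Open Scope ring_scope.

Lemma countable_set_real_compl (R : realType) (B : set R) : countable B -> exists x, ~ B x.
Proof.
move=> cB; apply/not_existsP => Bx.
have sub : [set` `]-oo, +oo[%R] `<=` B by move=> x _; have := Bx x; case: (pselect (B x)).
have := countable_lebesgue_measure0 (sub_countable (subset_card_le sub) cB).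
by rewrite lebesgue_measure_itv.
Qed.

Lemma countable_roots (R : realType) (p : {poly R}) : p != 0 -> countable [set x | root p x].
Proof.
move=> p0; apply: finite_set_countable.
rewrite (_ : [set x | root p x] = [set` rootsR p]); first exact: finite_seq.
by apply/seteqP; split=> x /=; rewrite (roots_onP (roots_on_rootsR p0)) ?in_itv.
Qed.

Lemma sum_indicator1 (R : nzRingType) (n k : nat) (c : 'I_n -> R) (e : 'I_n -> nat) (j : 'I_n) :
  e j = k -> (forall i, e i = k -> i = j) -> \sum_(i < n) c i * (k == e i)%:R = c j.
Proof.
move=> ej ue; rewrite (bigD1 j) //= ej eqxx mulr1 big1 ?addr0 // => i ij.
by case: eqP => [ik|_]; [rewrite (ue i (esym ik)) eqxx in ij|rewrite mulr0].
Qed.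

Lemma sum_indicator0 (R : nzRingType) (n k : nat) (c : 'I_n -> R) (e : 'I_n -> nat) :
  (forall i, e i <> k) -> \sum_(i < n) c i * (k == e i)%:R = 0.
Proof. by move=> ek; rewrite big1 // => i _; case: eqP => [/esym/ek|_] //; rewrite mulr0. Qed.

Section AvoidHyperplanes.
Variables (R : realType) (d : nat).
Implicit Types (a : 'rV[R]_d.+1) (b s : R).

Definition moment s : 'rV[R]_d := \row_(i < d) s ^+ i.+1.

(* [(normsq (moment s) + 1) * (a . istereo (moment s) - b)] as a polynomial in [s], see
   [dotp_istereo] *)
Definition trace_poly a b : {poly R} :=
  (last_row a - b) *: \sum_(i < d) 'X^((i.+1).*2)
  + 2 *: \sum_(i < d) belast_row a 0 i *: 'X^(i.+1) - (last_row a + b)%:P.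

Lemma trace_poly_moment a b s :
  (trace_poly a b).[s] = (normsq (moment s) + 1) * (dotp a (istereo (moment s)) - b).
Proof.
rewrite dotp_istereo /trace_poly /normsq /dotp !hornerE !horner_sum; congr (_ * _ + 2 * _ - _).
  by apply: eq_bigr => i _; rewrite ?hornerXn mxE -expr2 -exprM muln2.
by apply: eq_bigr => i _; rewrite ?hornerZ ?hornerXn [moment _ _ _]mxE.
Qed.

Lemma coef_trace_poly a b k : (trace_poly a b)`_k =
  (last_row a - b) * \sum_(i < d) 1 * (k == (i.+1).*2)%:R
  + 2 * \sum_(i < d) belast_row a 0 i * (k == i.+1)%:R
  - (if k == 0%N then last_row a + b else 0).
Proof.
rewrite /trace_poly coefB coefD coefC !coefZ !coef_sum; congr (_ * _ + 2 * _ - _).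
  by apply: eq_bigr => i _; rewrite coefXn mul1r.
by apply: eq_bigr => i _; rewrite coefZ coefXn.
Qed.

Lemma trace_poly_neq0 a b : (0 < d)%N -> a != 0 -> trace_poly a b != 0.
Proof.
move=> d0 a0; set u := belast_row a; set t := last_row a.
have [tb|tb] := eqVneq t b; last first.
  (* the top coefficient, of degree [d.*2], is [t - b] *)
  have d1 : (d.-1 < d)%N by rewrite prednK.
  apply: contra_neq tb => /(congr1 (fun p : {poly R} => p`_(d.*2))).
  rewrite coefC coef_trace_poly -/u -/t (@sum_indicator1 _ _ _ _ _ (Ordinal d1)); last 2 first.
  - by rewrite /= prednK.
  - by move=> i /(congr1 half); rewrite !doubleK => /(congr1 predn) i_d; apply: val_inj.
  rewrite sum_indicator0 => [|i]; last by rewrite -muln2; have := ltn_ord i; lia.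
  have -> : (d.*2 == 0%N) = false by rewrite double_eq0 eqn0Ngt d0.
  by rewrite mulr1 mulr0 addr0 subr0 => /eqP; rewrite subr_eq0 => /eqP.
have [j uj|u0] := pickP (fun j => u 0 j != 0).
  (* some coefficient of degree [j.+1 <= d] is [2 * u_j] *)
  apply/eqP => /(congr1 (fun p : {poly R} => p`_j.+1)).
  rewrite coefC coef_trace_poly -/u -/t tb subrr mul0r add0r subr0.
  rewrite (@sum_indicator1 _ _ _ _ _ j) // => [/eqP|i [/val_inj //]].
  by rewrite mulf_eq0 pnatr_eq0 (negbTE uj).
have {}u0 : u = 0 by apply/rowP => j; rewrite [RHS]mxE; apply/eqP/negbFE; exact: u0 j.
have t0 : t != 0.
  apply: contra_neq a0 => t0; apply: normsq_eq0.
  by rewrite -(rcons_belast_row a) normsq_rcons_row -/u -/t u0 t0 /normsq dotp0l expr0n addr0.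
(* the constant coefficient is [- 2 t] *)
apply/eqP => /(congr1 (fun p : {poly R} => p`_0)).
rewrite coefC coef_trace_poly -/u -/t tb subrr mul0r add0r sum_indicator0 // mulr0 add0r -tb => /eqP.
by rewrite /= oppr_eq0 -mulr2n mulrn_eq0 (negbTE t0).
Qed.

(* The countably many hyperplanes meet the curve [istereo \o moment] in countably many points. *)
Lemma exists_unit_avoiding_hyperplanes (V : Type) (a : V -> 'rV[R]_d.+1) (b : V -> R) :
  (0 < d)%N -> countable_type V -> (forall v, a v != 0) ->
  exists p, normsq p = 1 /\ forall v, dotp (a v) p != b v.
Proof.
move=> d0 [g g_inj] a0.
pose B := \bigcup_(v in [set: V]) [set s | root (trace_poly (a v) (b v)) s].
have cB : countable B.
  apply: bigcup_countable => [|v _]; last exact/countable_roots/trace_poly_neq0.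
  by apply/countable_injP; exists g => u v _ _; apply: g_inj.
have [s Bs] := countable_set_real_compl cB.
exists (istereo (moment s)); split=> [|v]; first exact: normsq_istereo.
by apply/eqP => abv; apply: Bs; exists v => //=; rewrite /root trace_poly_moment abv subrr mulr0.
Qed.

End AvoidHyperplanes.

Local Close Scope classical_set_scope.

Section Chords.
Variable R : realType.
Implicit Types (a p q u w x : 'rV[R]_2) (b s t : R).

Lemma dotp2 x u : dotp x u = x 0 ord0 * u 0 ord0 + x 0 ord_max * u 0 ord_max.
Proof. by rewrite /dotp big_ord_recr big_ord1 (_ : widen_ord _ _ = ord0) //; apply: val_inj. Qed.

Definition perp w : 'rV[R]_2 := \row_(j < 2) if j == ord0 then - w 0 ord_max else w 0 ord0.

Lemma dotp_perp w : dotp w (perp w) = 0.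
Proof. by rewrite dotp2 !mxE /=; ring. Qed.

Lemma ord2P (j : 'I_2) : j = ord0 \/ j = ord_max.
Proof. by case: j => [[|[|//]] j2]; [left|right]; apply: val_inj. Qed.

Lemma perp_decomp a x : normsq a *: x = dotp x a *: a + dotp x (perp a) *: perp a.
Proof.
apply/rowP => j; rewrite /normsq !dotp2 !mxE.
by case: (ord2P j) => ->; rewrite ?eqxx /=; ring.
Qed.

Lemma normsq_perp w : normsq (perp w) = normsq w.
Proof. by rewrite /normsq !dotp2 !mxE /=; ring. Qed.

Lemma perp_neq0 w : w != 0 -> perp w != 0.
Proof. by apply: contraNneq => w0; apply/eqP/normsq_eq0; rewrite -normsq_perp w0 /normsq dotp0l. Qed.

Lemma orthogonal2_colinear a u w : a != 0 -> w != 0 ->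
  dotp u a = 0 -> dotp w a = 0 -> exists s, u = s *: w.
Proof.
move=> a0 w0 ua wa; have a2 : normsq a != 0 by rewrite gt_eqF ?normsq_gt0.
have := perp_decomp a u; have := perp_decomp a w; rewrite ua wa !scale0r !add0r.
move=> wP uP; have wPa : dotp w (perp a) != 0.
  by apply: contra_neq w0 => wPa0; apply: (scalerI a2); rewrite wP wPa0 !scale0r scaler0.
exists (dotp u (perp a) / dotp w (perp a)); apply: (scalerI a2).
by rewrite scalerA mulrC -scalerA wP scalerA divfK.
Qed.

Lemma ball_section_chord a b p q x : a != 0 -> p != q ->
  normsq p = 1 -> normsq q = 1 -> dotp a p = b -> dotp a q = b ->
  ball_section a b x <-> exists t, 0 <= t <= 1 /\ x = (1 - t) *: p + t *: q.
Proof.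
move=> a0 pq p1 q1 ap aq; have pq1 := dotp_unit_lt1 pq p1 q1; split.
  move=> [x1 ax]; have qp0 : q - p != 0 by rewrite subr_eq0 eq_sym.
  have xpa : dotp (x - p) a = 0 by rewrite dotpC dotpBr ax ap subrr.
  have qpa : dotp (q - p) a = 0 by rewrite dotpC dotpBr aq ap subrr.
  have [s xps] := orthogonal2_colinear a0 qp0 xpa qpa.
  have xE : x = p + s *: (q - p) by rewrite -xps addrC subrK.
  move: x1; rewrite /unit_ball xE normsq_line normsqB p1 q1 dotpBr -/(normsq p) p1 (dotpC q p).
  move=> x1; have : 2 * (1 - dotp p q) * (s ^+ 2 - s) <= 0 by lra.
  rewrite pmulr_rle0 ?mulr_gt0 ?subr_gt0 // => s01.
  exists s; split; first by apply/andP; split; nra.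
  by apply/rowP => j; rewrite !mxE; ring.
case=> t [/andP [t0 t1] ->]; split; last by rewrite dotpDr !dotpZr ap aq; ring.
rewrite /unit_ball normsqD !normsqZ dotpZl dotpZr p1 q1 -subr_ge0.
rewrite (_ : 1 - _ = 2 * (t * (1 - t) * (1 - dotp p q))); last by ring.
by rewrite !mulr_ge0 // ?subr_ge0 // ltW.
Qed.

Lemma Hd_member1_chord (S : 'rV[R]_2 -> Prop) : is_Hd_member (d := 1) S <-> is_chord S.
Proof.
split=> [[a [b [a0 [[x0 [ax0 x01]] SE]]]]|[p [q [pq [p1 [q1 SE]]]]]].
  have [t1 [t2 [t12 [xt1 xt2]]]] := line_meets_unit_sphere2 x01 (perp_neq0 a0).
  have on_line t : dotp a (x0 + t *: perp a) = b by rewrite dotpDr dotpZr dotp_perp mulr0 addr0.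
  have pq : x0 + t1 *: perp a != x0 + t2 *: perp a.
    by apply: contra_neq t12 => /addrI /eqP; rewrite -subr_eq0 -scalerBl scaler_eq0 subr_eq0
      (negbTE (perp_neq0 a0)) orbF => /eqP.
  exists (x0 + t1 *: perp a), (x0 + t2 *: perp a); split=> //; split=> //; split=> // x.
  by rewrite SE; apply: ball_section_chord.
have qp0 : q - p != 0 by rewrite subr_eq0 eq_sym.
set a := perp (q - p).
have aq : dotp a q = dotp a p.
  by apply/eqP; rewrite -subr_eq0 -dotpBr dotpC dotp_perp.
exists a, (dotp a p); split; first exact: perp_neq0.
split=> [|x]; last by rewrite SE; symmetry; apply: ball_section_chord; rewrite ?perp_neq0.
exists ((1 / 2) *: (p + q)); split; first by rewrite dotpZr dotpDr aq; field.
by rewrite normsqZ normsqD p1 q1; have := dotp_unit_lt1 pq p1 q1; lra.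
Qed.

End Chords.

Lemma choice2 (V A B : Type) (P : V -> A -> B -> Prop) :
  (forall v, exists a b, P v a b) ->
  exists (fa : V -> A) (fb : V -> B), forall v, P v (fa v) (fb v).
Proof. by move=> /choice [fa /choice [fb Pf]]; exists fa, fb. Qed.

Section IntersectionGraphs.
Variables (R : realType) (V : Type) (adj : V -> V -> Prop).

(* [intersection_graph_of P adj] unfolds to [exists f, (forall v, P (f v)) /\ represents f] *)
Definition represents n (f : V -> 'rV[R]_n -> Prop) :=
  (forall u v, (forall x, f u x <-> f v x) -> u = v) /\
  (forall u v, u <> v -> (adj u v <-> exists x, f u x /\ f v x)).

Lemma represents_ext n (f g : V -> 'rV[R]_n -> Prop) :
  (forall v x, f v x <-> g v x) -> represents f -> represents g.
Proof.
move=> fg [f_inj f_adj]; split=> [u v guv|u v uv]; last first.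
  by rewrite f_adj //; split=> -[x [ux vx]]; exists x; split; apply/fg.
by apply: f_inj => x; rewrite !fg.
Qed.

Lemma represents_transfer n m (f : V -> 'rV[R]_n -> Prop) (g : V -> 'rV[R]_m -> Prop) :
  (forall u v, (forall y, g u y <-> g v y) -> forall x, f u x <-> f v x) ->
  (forall u v, (exists x, f u x /\ f v x) <-> (exists y, g u y /\ g v y)) ->
  represents f -> represents g.
Proof.
by move=> gf meet [f_inj f_adj]; split=> [u v /gf/f_inj //|u v uv]; rewrite f_adj.
Qed.

Lemma intersection_graph_of_sub n (P Q : ('rV[R]_n -> Prop) -> Prop) :
  (forall S, P S -> Q S) -> intersection_graph_of P adj -> intersection_graph_of Q adj.
Proof. by move=> PQ [f [Pf f_rep]]; exists f; split=> // v; apply: PQ. Qed.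

End IntersectionGraphs.

Section SphereGraphs.
Variables (R : realType) (d : nat) (V : Type) (adj : V -> V -> Prop).

Definition is_Hd_member_off_north (S : 'rV[R]_d.+1 -> Prop) := exists a b,
  [/\ b ^+ 2 < normsq a, last_row a != b & forall x, S x <-> ball_section a b x].

Lemma off_north_Hd_member S : is_Hd_member_off_north S -> is_Hd_member S.
Proof.
case=> a [b [ab _ SE]]; have a0 := normsq_gt_sqr_neq0 ab.
by exists a, b; split=> //; split=> //; apply/hyperplane_meets_open_ball.
Qed.

(* A reflection moves a point of the sphere that avoids all the hyperplanes to the north pole. *)
Lemma Hd_graph_off_north : (0 < d)%N -> countable_type V ->
  intersection_graph_of (@is_Hd_member R d) adj ->
  intersection_graph_of is_Hd_member_off_north adj.
Proof.
move=> d0 cV [f [Hf f_rep]]; have [a [b Hab]] := choice2 Hf.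
have a0 v : a v != 0 by case: (Hab v).
have [p [p1 pab]] := exists_unit_avoiding_hyperplanes b d0 cV a0.
pose w := p - north R d.
exists (fun v x => f v (mirror w x)); split=> [v|].
  have [_ [/(hyperplane_meets_open_ball _ (a0 v)) ab fE]] := Hab v.
  exists (mirror w (a v)), (b v); split.
  - by rewrite normsq_mirror.
  - by rewrite -dotp_north dotp_mirror_adj mirror_unit_swap ?normsq_north.
  - by move=> x; rewrite fE /ball_section /unit_ball normsq_mirror dotp_mirror_adj.
apply: represents_transfer f_rep => [u v fuv x|u v].
  by rewrite -(mirrorK w x); apply: fuv.
split=> -[x fx]; last by exists (mirror w x).
by exists (mirror w x); rewrite /= mirrorK.
Qed.

Lemma off_north_graph_sphere : (2 <= d)%N ->
  intersection_graph_of is_Hd_member_off_north adj <->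
  intersection_graph_of (@is_sphere R d) adj.
Proof.
move=> d2; split=> [[f [Hf f_rep]]|[g [Hg g_rep]]].
  have [a [b Hab]] := choice2 Hf.
  have fE v x : f v x <-> ball_section (a v) (b v) x by case: (Hab v).
  have aN v : last_row (a v) != b v by case: (Hab v).
  exists (fun v => stereo_trace (a v) (b v)); split=> [v|].
    by case: (Hab v) => ab _ _; apply: stereo_trace_sphere.
  apply: represents_transfer (represents_ext fE f_rep) => u v.
    exact: ball_sections_eq.
  exact: ball_sections_meet.
have [c [r Hcr]] := choice2 Hg.
have r0 v : 0 < r v by case: (Hcr v).
have [a [b Hab]] := choice2 (fun v => sphere_stereo_trace (c v) (r0 v)).
have gE v y : g v y <-> stereo_trace (a v) (b v) y.
  by case: (Hcr v) => _ ->; case: (Hab v) => _ _ ->.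
exists (fun v => ball_section (a v) (b v)); split=> [v|].
  by case: (Hab v) => ab aN _; exists (a v), (b v).
apply: represents_transfer (represents_ext gE g_rep) => u v.
  by move=> uv y; rewrite -!ball_section_istereo.
by rewrite ball_sections_meet //; case: (Hab u).
Qed.

End SphereGraphs.

Theorem mainTheorem3 (R : realType) (d : nat) (V : Type) (adj : V -> V -> Prop) :
  (1 <= d)%N -> simple_graph adj -> countable_type V ->
  (is_d_sphere_graph R d adj <-> in_Sd R d adj).
Proof.
move=> d1 _ cV; rewrite /in_Sd /is_d_sphere_graph; case: ifP => [d2|d_le1].
  rewrite -off_north_graph_sphere //; split; first exact: Hd_graph_off_north.
  exact: intersection_graph_of_sub (@off_north_Hd_member R d).
have -> : d = 1%N by apply/eqP; rewrite eqn_leq d1 andbT leqNgt d_le1.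
by split; apply: intersection_graph_of_sub => S /Hd_member1_chord.
Qed.
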